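(* Let $m\ge 2$ and $n\ge1$ be integers with $m(n-1)$ even, let ${\bf h}\in\mathbb{R}^{m(n-1)+1}$, let $\mathcal{H}$ be the $m^{\rm th}$-order $n$-dimensional Hankel tensor generated by ${\bf h}$, and let $H$ be the associated Hankel matrix of $\mathcal{H}$. If $H$ has no negative (resp. no non-positive, no positive, no nonnegative) eigenvalues, then $\mathcal{H}$ has no negative (resp. no non-positive, no positive, no nonnegative) H-eigenvalues.
   Context: The Hankel tensor generated by ${\bf h}=(h_0,\dots,h_{m(n-1)})$ has entries $\mathcal{H}_{i_1\dots i_m}=h_{i_1+\dots+i_m}$, $0\le i_j\le n-1$; its associated Hankel matrix is the square matrix $H$ with $H_{ij}=h_{i+j}$, $0\le i,j\le m(n-1)/2$. For a real $m^{\rm th}$-order $n$-dimensional tensor $\mathcal{T}$, $(\mathcal{T}{\bf x}^{m-1})_i=\sum_{i_2,\dots,i_m}\mathcal{T}_{i i_2\dots i_m}x_{i_2}\cdots x_{i_m}$, and a real number $\lambda$ is an H-eigenvalue of $\mathcal{T}$ if there is a nonzero ${\bf x}\in\mathbb{R}^n$ with $\mathcal{T}{\bf x}^{m-1}=\lambda{\bf x}^{[m-1]}$, ${\bf x}^{[m-1]}=(x_1^{m-1},\dots,x_n^{m-1})^\top$. *)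

From HB Require Import structures.
From mathcomp Require Import all_boot all_order all_algebra.
From mathcomp Require Import reals.
Set Implicit Arguments. Unset Strict Implicit. Unset Printing Implicit Defensive.
Import Order.TTheory GRing.Theory Num.Theory.
Local Open Scope ring_scope.

(* A real m-th order n-dimensional
   tensor is given as T i f = T_{i i_2 ... i_m}, where the first index is
   i : 'I_n and the remaining m-1 indices are f : {ffun 'I_m.-1 -> 'I_n}. *)
Definition tensor (R : Type) (m n : nat) := 'I_n -> {ffun 'I_m.-1 -> 'I_n} -> R.

Definition tensor_apply (R : realType) (m n : nat) (T : tensor R m n)
    (x : 'rV[R]_n) : 'rV[R]_n :=
  \row_(i < n) \sum_(f : {ffun 'I_m.-1 -> 'I_n}) T i f * \prod_(k < m.-1) x 0 (f k).

Definition pow_vec (R : realType) (n k : nat) (x : 'rV[R]_n) : 'rV[R]_n :=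
  \row_(i < n) x 0 i ^+ k.

Definition H_eigenvalue (R : realType) (m n : nat) (T : tensor R m n) (lam : R) : Prop :=
  exists x : 'rV[R]_n, x != 0 /\ tensor_apply T x = lam *: pow_vec m.-1 x.

Definition hankel_tensor (R : realType) (m n : nat) (h : 'rV[R]_(m * (n - 1)).+1)
    : tensor R m n :=
  fun i f => h 0 (inord (i + \sum_(k < m.-1) (f k : nat))).

Definition hankel_matrix (R : realType) (m n : nat) (h : 'rV[R]_(m * (n - 1)).+1)
    : 'M[R]_((m * (n - 1))./2.+1) :=
  \matrix_(i, j) h 0 (inord (i + j)).

From HB Require Import structures.
From mathcomp Require Import all_boot all_order all_algebra.
From mathcomp Require Import reals complex.
From mathcomp Require Import lra zify.
Set Implicit Arguments. Unset Strict Implicit. Unset Printing Implicit Defensive.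
Import Order.TTheory GRing.Theory Num.Theory.
Local Open Scope ring_scope.

(* Write P for the polynomial whose coefficient vector is x, and L_h for the
   linear functional p |-> sum_k h_k p_k.  Pairing the vector H x^{m-1} with
   a vector y gives L_h(Y P^{m-1}), where Y is the polynomial of y, while
   L_h(Q^2) is the quadratic form of the Hankel matrix at the coefficient
   vector of Q.  For an H-eigenpair (lam, x) one picks Y such that Y P^{m-1}
   is the square of a polynomial Q of degree at most m(n-1)/2 and the pairing
   of y with x^{[m-1]} is positive: Y = P if m is even, and, if m is odd,
   Y = (X^a + X^b)^2 with a + b an index where x does not vanish.  Then
   lam * <y, x^{[m-1]}> is the quadratic form of H at q, whose sign is
   governed by the eigenvalues of the symmetric matrix H. *)

Lemma psumr_gt0 (R : numDomainType) (I : finType) (F : I -> R) (i0 : I) :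
  (forall i, 0 <= F i) -> 0 < F i0 -> 0 < \sum_i F i.
Proof.
move=> F_ge0 Fi0_gt0; rewrite (bigD1 i0) //= ltr_pwDl //.
by apply: sumr_ge0 => i _; exact: F_ge0.
Qed.

Lemma eigenvalueN (F : fieldType) n (A : 'M[F]_n) a :
  eigenvalue (- A) a -> eigenvalue A (- a).
Proof.
move=> /eigenvalueP [v vA v_neq0]; apply/eigenvalueP; exists v => //.
by rewrite scaleNr -vA mulmxN opprK.
Qed.

Section NormalMatrix.
Variable C : numClosedFieldType.
Local Open Scope sesquilinear_scope.

Lemma spectral_diag_eigenvalue n (A : 'M[C]_n) i :
  A \is normalmx -> eigenvalue A (spectral_diag A 0 i).
Proof.
move=> /orthomx_spectralP A_spectral; set P := spectralmx A.
have P_unit : P \in unitmx := spectral_unit A.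
apply/eigenvalueP; exists (row i P).
  rewrite [in LHS]A_spectral !mulmxA -row_mul mulmxV // row1 mul_mx_diag.
  rewrite rowE scalemxAl; congr (_ *m _); apply/rowP => j; rewrite !mxE.
  by have [->|] := eqVneq j i; [rewrite mulrC | rewrite andbF mul0r mulr0].
apply/eqP => Pi0; have := row_mul i P (invmx P).
rewrite Pi0 mul0mx mulmxV // row1 => /rowP/(_ i).
by rewrite !mxE !eqxx /= => /eqP; rewrite oner_eq0.
Qed.

Lemma normalmx_qform n (A : 'M[C]_n) (q : 'rV[C]_n) (w := q *m (spectralmx A)^t*) :
  A \is normalmx ->
  (q *m A *m q^t*) 0 0 = \sum_i spectral_diag A 0 i * (w 0 i * (w 0 i)^*).
Proof.
move=> /orthomx_spectralP A_spectral.
rewrite [in LHS]A_spectral invmx_unitary ?spectral_unitarymx //.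
have -> : q *m ((spectralmx A)^t* *m diag_mx (spectral_diag A) *m spectralmx A) *m q^t*
          = w *m diag_mx (spectral_diag A) *m w^t*.
  by rewrite /w !mulmxA trmx_mul map_mxM trmxCK !mulmxA.
by rewrite mxE; apply: eq_bigr => i _; rewrite mul_mx_diag !mxE mulrAC mulrC.
Qed.

Lemma spectral_coord_neq0 n (A : 'M[C]_n) (q : 'rV[C]_n) :
  q != 0 -> q *m (spectralmx A)^t* != 0.
Proof.
apply: contraNneq => w0.
rewrite -[q]mulmx1 -(mulVmx (spectral_unit A)) invmx_unitary ?spectral_unitarymx //.
by rewrite mulmxA w0 mul0mx.
Qed.
End NormalMatrix.

(* The spectral theorem of the library concerns complex normal matrices, so a
   real symmetric matrix is studied through its image in [complex R]. *)
Section RealSymmetric.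
Variable R : rcfType.
Local Notation toC := (real_complex R).
Local Open Scope sesquilinear_scope.

Definition qform n (A : 'M[R]_n) (q : 'rV[R]_n) : R := (q *m A *m q^T) 0 0.

Lemma qformN n (A : 'M[R]_n) q : qform (- A) q = - qform A q.
Proof. by rewrite /qform mulmxN mulNmx mxE. Qed.

Lemma real_complex_real (x : R) : toC x \is Num.real.
Proof. by apply/complex_realP; exists x. Qed.

Lemma eigenvalue_map_real_complex n (A : 'M[R]_n) a :
  eigenvalue (map_mx toC A) (toC a) -> eigenvalue A a.
Proof. by rewrite !eigenvalue_root_char -map_char_poly fmorph_root. Qed.

Lemma map_real_complex_hermsym n (A : 'M[R]_n) :
  A^T = A -> map_mx toC A \is hermsymmx.
Proof.
move=> A_sym; apply: realsym_hermsym.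
  by apply/is_hermitianmxP; rewrite expr0 scale1r map_mx_id // map_trmx A_sym.
by apply/mxOverP => i j; rewrite mxE real_complex_real.
Qed.

Lemma realsym_spectral_diag n (A : 'M[R]_n) i : A^T = A ->
  exists2 a, eigenvalue A a & spectral_diag (map_mx toC A) 0 i = toC a.
Proof.
move=> /map_real_complex_hermsym A_herm.
have /mxOverP/(_ 0 i)/RRe_real := hermitian_spectral_diag_real A_herm.
set d := spectral_diag _ 0 i => d_real.
exists (complex.Re d) => //; apply: eigenvalue_map_real_complex.
by rewrite d_real; apply: spectral_diag_eigenvalue; exact: hermitian_normalmx.
Qed.

Lemma map_real_complex_qform n (A : 'M[R]_n) q :
  toC (qform A q) = (map_mx toC q *m map_mx toC A *m (map_mx toC q)^t*) 0 0.
Proof.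
have -> : (map_mx toC q)^t* = map_mx toC q^T.
  by apply/matrixP => i j; rewrite !mxE conj_Creal // real_complex_real.
by rewrite -!map_mxM mxE.
Qed.

Lemma qform_ge0 n (A : 'M[R]_n) :
  A^T = A -> (forall a, eigenvalue A a -> 0 <= a) -> forall q, 0 <= qform A q.
Proof.
move=> A_sym A_psd q; rewrite -ler0c map_real_complex_qform normalmx_qform; last first.
  exact/hermitian_normalmx/map_real_complex_hermsym.
apply: sumr_ge0 => i _; apply: mulr_ge0; last exact: mul_conjC_ge0.
by have [a /A_psd a_ge0 ->] := realsym_spectral_diag i A_sym; rewrite ler0c.
Qed.

Lemma qform_gt0 n (A : 'M[R]_n) :
  A^T = A -> (forall a, eigenvalue A a -> 0 < a) ->
  forall q, q != 0 -> 0 < qform A q.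
Proof.
move=> A_sym A_pd q q_neq0.
rewrite -ltcR rmorph0 map_real_complex_qform normalmx_qform; last first.
  exact/hermitian_normalmx/map_real_complex_hermsym.
have /rV0Pn [i0 w_i0] : map_mx toC q *m (spectralmx (map_mx toC A))^t* != 0.
  by apply: spectral_coord_neq0; rewrite map_mx_eq0.
apply: (psumr_gt0 (i0 := i0)) => [i|].
  apply: mulr_ge0; last exact: mul_conjC_ge0.
  by have [a /A_pd/ltW a_ge0 ->] := realsym_spectral_diag i A_sym; rewrite ler0c.
rewrite mulr_gt0 ?mul_conjC_gt0 //.
by have [a /A_pd a_gt0 ->] := realsym_spectral_diag i0 A_sym; rewrite ltcR.
Qed.

Lemma qform_le0 n (A : 'M[R]_n) :
  A^T = A -> (forall a, eigenvalue A a -> a <= 0) -> forall q, qform A q <= 0.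
Proof.
move=> A_sym A_nsd q; rewrite -oppr_ge0 -qformN.
apply: qform_ge0 => [|a /eigenvalueN/A_nsd]; last by rewrite oppr_le0.
by rewrite linearN /= A_sym.
Qed.

Lemma qform_lt0 n (A : 'M[R]_n) :
  A^T = A -> (forall a, eigenvalue A a -> a < 0) ->
  forall q, q != 0 -> qform A q < 0.
Proof.
move=> A_sym A_nd q q_neq0; rewrite -oppr_gt0 -qformN.
apply: qform_gt0 => // [|a /eigenvalueN/A_nd]; last by rewrite oppr_lt0.
by rewrite linearN /= A_sym.
Qed.
End RealSymmetric.

Lemma rVpoly_sum (R : nzSemiRingType) d (v : 'rV[R]_d) :
  rVpoly v = \sum_(i < d) v 0 i *: 'X^i.
Proof. by rewrite /rVpoly poly_def; apply: eq_bigr => i _; rewrite valK. Qed.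

Lemma size_rVpoly (R : nzSemiRingType) d (v : 'rV[R]_d) : (size (rVpoly v) <= d)%N.
Proof. exact: size_poly. Qed.

Lemma rVpoly_eq0 (R : nzRingType) d (v : 'rV[R]_d) : (rVpoly v == 0) = (v == 0).
Proof. by rewrite -[RHS](can_eq rVpolyK) linear0. Qed.

Lemma coef_sqr_XnDXn (R : comNzSemiRingType) a b i :
  (('X^a + 'X^b : {poly R}) ^+ 2)`_i =
  (i == a + a)%N%:R + (i == a + b)%N%:R *+ 2 + (i == b + b)%N%:R.
Proof. by rewrite sqrrD !expr2 -!exprD !coefD !coefXn -mulr2n. Qed.

Section SosMultiplier.
Variables (R : realDomainType) (m n : nat) (x : 'rV[R]_n).

Definition sos_multiplier (Y Q : {poly R}) : Prop :=
  [/\ (size Y <= n)%N, (size Q <= (m * (n - 1))./2.+1)%N, Q != 0,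
      Y * rVpoly x ^+ m.-1 = Q ^+ 2 & 0 < \sum_(i < n) Y`_i * x 0 i ^+ m.-1].

Hypotheses (m_gt0 : (0 < m)%N) (x_neq0 : x != 0).

Let P := rVpoly x.

Let P_neq0 : P != 0. Proof. by rewrite rVpoly_eq0. Qed.

Let size_P_exp j : (size (P ^+ j) <= (n - 1) * j + 1)%N.
Proof.
apply: leq_trans (size_poly_exp_leq P j) _; rewrite addn1 ltnS leq_mul2r.
by apply/orP; right; have := size_rVpoly x; rewrite -/P; lia.
Qed.

Lemma sos_multiplier_even : ~~ odd m -> sos_multiplier P (P ^+ m./2).
Proof.
move=> m_even; set j := m./2.
have m_2j : m = (j * 2)%N by rewrite muln2; have := odd_double_half m; rewrite (negbTE m_even).
have /rV0Pn [i0 x_i0] := x_neq0.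
split.
- exact: size_rVpoly.
- by rewrite m_2j mulnAC muln2 doubleK; have := size_P_exp j; lia.
- exact: expf_neq0.
- by rewrite -exprS prednK // -exprM -m_2j.
apply: (psumr_gt0 (i0 := i0)) => [i|]; rewrite coef_rVpoly_ord -exprS prednK // m_2j exprM.
  exact: sqr_ge0.
by rewrite exprn_even_gt0 ?odd2 // expf_neq0.
Qed.

Lemma sos_multiplier_odd : odd m -> ~~ odd (m * (n - 1)) ->
  exists Y Q, sos_multiplier Y Q.
Proof.
move=> m_odd N_even; set j := m./2; set k := (n - 1)./2.
have m_2j1 : m = (j * 2).+1 by rewrite muln2; have := odd_double_half m; rewrite m_odd.
have n1_even : ~~ odd (n - 1) by move: N_even; rewrite oddM m_odd.
have n1_2k : (n - 1)%N = (k * 2)%N.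
  by rewrite muln2; have := odd_double_half (n - 1); rewrite (negbTE n1_even).
have /rV0Pn [i0 x_i0] := x_neq0.
set a := i0./2; set b := uphalf i0.
have ab_i0 : (a + b)%N = i0.
  by rewrite /a /b uphalf_half; have := odd_double_half i0; case: odd => /=; lia.
have b_le_k : (b <= k)%N.
  rewrite /b uphalf_half; have := odd_double_half i0; have := ltn_ord i0.
  by case: odd => /=; lia.
set Z : {poly R} := 'X^a + 'X^b.
have size_Z : (size Z <= b.+1)%N.
  by apply: leq_trans (size_polyD _ _) _; rewrite !size_polyXn geq_max ltnS; lia.
have Z2_ge0 i : 0 <= (Z ^+ 2)`_i by rewrite coef_sqr_XnDXn !addr_ge0 ?mulrn_wge0.
have Z2_i0_gt0 : 0 < (Z ^+ 2)`_i0.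
  have := ler0n R ((i0 : nat) == a + a); have := ler0n R ((i0 : nat) == b + b).
  by rewrite coef_sqr_XnDXn ab_i0 eqxx /= mulr1n; lra.
exists (Z ^+ 2), (Z * P ^+ j); split.
- apply: leq_trans (size_poly_exp_leq Z 2) _.
  by have := ltn_ord i0; lia.
- apply: leq_trans (size_polyMleq _ _) _.
  rewrite n1_2k mulnA muln2 doubleK m_2j1.
  by have := size_P_exp j; rewrite n1_2k; nia.
- rewrite mulf_neq0 ?expf_neq0 //; apply: contraTneq Z2_i0_gt0 => ->.
  by rewrite expr0n coef0 ltxx.
- by rewrite exprMn m_2j1 /= -exprM mulnC.
apply: (psumr_gt0 (i0 := i0)) => [i|]; rewrite m_2j1 /= exprM.
  by rewrite mulr_ge0 ?sqr_ge0.
by rewrite mulr_gt0 // exprn_even_gt0 ?odd2 // expf_neq0.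
Qed.

Lemma exists_sos_multiplier : ~~ odd (m * (n - 1)) -> exists Y Q, sos_multiplier Y Q.
Proof.
move=> N_even; have [m_odd|m_even] := boolP (odd m); first exact: sos_multiplier_odd.
by exists P, (P ^+ m./2); exact: sos_multiplier_even.
Qed.
End SosMultiplier.

Section HankelFunctional.
Variables (R : comNzRingType) (N : nat) (h : 'rV[R]_N.+1).

Definition hankel_lin (p : {poly R}) : R := \sum_(k < N.+1) h 0 k * p`_k.

Lemma hankel_lin_sum (I : finType) (c : I -> R) (d : I -> nat) :
  (forall i, (d i <= N)%N) ->
  hankel_lin (\sum_i c i *: 'X^(d i)) = \sum_i c i * h 0 (inord (d i)).
Proof.
move=> d_le_N; rewrite /hankel_lin.
under eq_bigr do rewrite coef_sum mulr_sumr.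
rewrite exchange_big /=; apply: eq_bigr => i _.
rewrite (bigD1 (inord (d i))) //= big1 ?addr0.
  by rewrite coefZ coefXn inordK ?ltnS // eqxx mulr1 mulrC.
move=> k k_neq; rewrite coefZ coefXn; case: eqP => [k_di|_]; last by rewrite mulr0n !mulr0.
by case/eqP: k_neq; apply: val_inj; rewrite /= -k_di inordK.
Qed.
End HankelFunctional.

Section HankelTensor.
Variables (R : realType) (m n : nat) (h : 'rV[R]_(m * (n - 1)).+1).
Local Notation N := (m * (n - 1))%N.

Lemma hankel_index_bound (i : 'I_n) (f : {ffun 'I_m.-1 -> 'I_n}) :
  (0 < m)%N -> (i + \sum_(k < m.-1) f k <= N)%N.
Proof.
move=> m_gt0; rewrite -[m in (_ <= m * _)%N](prednK m_gt0) mulSn.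
apply: leq_add; first by have := ltn_ord i; lia.
rewrite -[X in (_ <= X * _)%N](card_ord m.-1) -sum_nat_const.
by apply: leq_sum => k _; have := ltn_ord (f k); lia.
Qed.

Lemma hankel_tensor_pair (x y : 'rV[R]_n) : (0 < m)%N ->
  \sum_(i < n) y 0 i * tensor_apply (hankel_tensor h) x 0 i =
  hankel_lin h (rVpoly y * rVpoly x ^+ m.-1).
Proof.
move=> m_gt0.
have rVpoly_exp : rVpoly x ^+ m.-1 = \sum_(f : {ffun 'I_m.-1 -> 'I_n})
    (\prod_(k < m.-1) x 0 (f k)) *: 'X^(\sum_(k < m.-1) (f k : nat)).
  rewrite rVpoly_sum -[in LHS](card_ord m.-1) -prodr_const bigA_distr_bigA /=.
  by apply: eq_bigr => f _; rewrite scaler_prod prodrXr.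
rewrite rVpoly_exp [rVpoly y]rVpoly_sum mulr_suml.
under [in RHS]eq_bigr do rewrite mulr_sumr.
under [in RHS]eq_bigr do under eq_bigr do rewrite -scalerAl -scalerAr scalerA -exprD.
rewrite pair_bigA hankel_lin_sum /=; last by move=> [i f]; exact: hankel_index_bound.
under eq_bigr do rewrite mxE mulr_sumr.
by rewrite pair_bigA /=; apply: eq_bigr => -[i f] _ /=; rewrite mulrA mulrAC.
Qed.

Lemma hankel_lin_sqr (q : 'rV[R]_N./2.+1) : ~~ odd N ->
  hankel_lin h (rVpoly q ^+ 2) = qform (hankel_matrix h) q.
Proof.
move=> N_even; rewrite expr2 rVpoly_sum mulr_suml.
under eq_bigr do rewrite mulr_sumr.
under eq_bigr do under eq_bigr do rewrite -scalerAl -scalerAr scalerA -exprD.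
rewrite pair_bigA hankel_lin_sum /=; last first.
  move=> [a b] /=; have := odd_double_half N; rewrite (negbTE N_even) add0n.
  by have := ltn_ord a; have := ltn_ord b; lia.
rewrite /qform mxE.
under [RHS]eq_bigr do rewrite !mxE mulr_suml.
rewrite exchange_big pair_bigA /=; apply: eq_bigr => -[a b] _ /=.
by rewrite !mxE mulrAC.
Qed.

Lemma hankel_matrix_sym : (hankel_matrix h)^T = hankel_matrix h.
Proof. by apply/matrixP => i j; rewrite !mxE addnC. Qed.

Lemma H_eigenvalue_hankel_qform (lam : R) : (0 < m)%N -> ~~ odd N ->
  H_eigenvalue (hankel_tensor h) lam ->
  exists2 S : R, 0 < S &
    exists2 q : 'rV[R]_N./2.+1, q != 0 & lam * S = qform (hankel_matrix h) q.
Proof.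
move=> m_gt0 N_even [x [x_neq0 x_eigen]].
have [Y [Q [size_Y size_Q Q_neq0 YPQ pos]]] := exists_sos_multiplier m_gt0 x_neq0 N_even.
exists (\sum_(i < n) Y`_i * x 0 i ^+ m.-1) => //.
exists (poly_rV Q); first by rewrite -rVpoly_eq0 poly_rV_K.
rewrite -hankel_lin_sqr // poly_rV_K // -YPQ -[in RHS](poly_rV_K size_Y).
rewrite -hankel_tensor_pair // x_eigen mulr_sumr; apply: eq_bigr => i _.
by rewrite !mxE mulrCA.
Qed.
End HankelTensor.

Theorem theorem5 (R : realType) (m n : nat) (h : 'rV[R]_(m * (n - 1)).+1) :
  (2 <= m)%N -> (1 <= n)%N -> ~~ odd (m * (n - 1)) ->
  [/\ (forall a : R, eigenvalue (@hankel_matrix R m n h) a -> 0 <= a) ->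
        (forall lam : R, H_eigenvalue (@hankel_tensor R m n h) lam -> 0 <= lam),
      (forall a : R, eigenvalue (@hankel_matrix R m n h) a -> 0 < a) ->
        (forall lam : R, H_eigenvalue (@hankel_tensor R m n h) lam -> 0 < lam),
      (forall a : R, eigenvalue (@hankel_matrix R m n h) a -> a <= 0) ->
        (forall lam : R, H_eigenvalue (@hankel_tensor R m n h) lam -> lam <= 0) &
      (forall a : R, eigenvalue (@hankel_matrix R m n h) a -> a < 0) ->
        (forall lam : R, H_eigenvalue (@hankel_tensor R m n h) lam -> lam < 0)].
Proof.
move=> m_ge2 _ N_even; have m_gt0 : (0 < m)%N by exact: ltnW.
have H_sym := hankel_matrix_sym h.
split=> H_sign lam /(H_eigenvalue_hankel_qform m_gt0 N_even) [S S_gt0 [q q_neq0 lamS]].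
- by rewrite -(pmulr_lge0 _ S_gt0) lamS qform_ge0.
- by rewrite -(pmulr_lgt0 _ S_gt0) lamS qform_gt0.
- by rewrite -(pmulr_lle0 _ S_gt0) lamS qform_le0.
- by rewrite -(pmulr_llt0 _ S_gt0) lamS qform_lt0.
Qed.
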